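(* Suppose $\mathcal{C}$ is an $[n,k]_q$ MWS code satisfying property (B). Then there exists $r=(r_1,\dots,r_{q-1})\in\mathbb{N}^{q-1}$, $r\neq 0$, such that, with $R=r_1+\dots+r_{q-1}$, the generalized $r$-repetition code $\mathcal{C}(r)$ is an $[Rn,k]_q$ MWS code satisfying properties (A) and (B).
   Context: Fix a primitive element $\alpha$ of $\mathbb{F}_q$; $\mathbb{N}=\{0,1,2,\dots\}$. An $[n,k]_q$ code is a $k$-dimensional subspace of $\mathbb{F}_q^n$ (non-degenerate if $k\ge2$); it is MWS if it has exactly $\frac{q^k-1}{q-1}$ distinct non-zero Hamming weights. For $c\in\mathbb{F}_q^n$, $\beta\in\mathbb{F}_q$, $c[\beta]=|\{l:c_l=\beta\}|$ and $V(c)=(c[\alpha],\dots,c[\alpha^{q-1}],c[0])$. For $r\in\mathbb{N}^{q-1}$, the generalized $r$-repetition code is $\mathcal{C}(r)=\{c^r: c\in\mathcal{C}\}$, where $c^r$ is the concatenation of $r_1$ copies of $\alpha c$, then $r_2$ copies of $\alpha^2 c$, ..., then $r_{q-1}$ copies of $\alpha^{q-1}c$ (a vector of length $Rn$). Property (A) for a code $\mathcal{D}$: there exists $\beta\in\mathbb{F}_q^*$ such that for $a,b\in\mathcal{D}$, $a[\beta]=b[\beta]$ only if $a=b$. Property (B) for a code $\mathcal{D}$: for every $c\in\mathcal{D}\setminus\{0\}$ the entries of $V(c)$ are pairwise distinct. *)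

From HB Require Import structures.
From mathcomp Require Import all_boot all_order all_algebra all_field.
Set Implicit Arguments. Unset Strict Implicit. Unset Printing Implicit Defensive.
Import GRing.Theory.
Local Open Scope ring_scope.

(* Codes over F = F_q (q = #|F|) of length n are subspaces
   C : {vspace 'rV[F]_n}. *)

Section Codes.
Variable F : finFieldType.

Definition wt n (c : 'rV[F]_n) : nat := #|[set i : 'I_n | c 0 i != 0]|.

Definition cnt n (c : 'rV[F]_n) (b : F) : nat := #|[set i : 'I_n | c 0 i == b]|.

Definition Vvec (alpha : F) n (c : 'rV[F]_n) : seq nat :=
  rcons [seq cnt c (alpha ^+ i.+1) | i <- iota 0 #|F|.-1] (cnt c 0).

Definition nondegenerate n (C : {vspace 'rV[F]_n}) : Prop :=
  forall i : 'I_n, exists2 c, c \in C & c 0 i != 0.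

Definition is_code n k (C : {vspace 'rV[F]_n}) : Prop :=
  \dim C = k /\ ((2 <= k)%N -> nondegenerate C).

Definition num_weights n (C : {vspace 'rV[F]_n}) : nat :=
  size (undup [seq w <- [seq wt c | c in [pred c : 'rV[F]_n | c \in C]] | w != 0%N]).

Definition is_MWS n k (C : {vspace 'rV[F]_n}) : Prop :=
  is_code k C /\ num_weights C = ((#|F| ^ k - 1) %/ (#|F| - 1))%N.

Definition propA n (D : {vspace 'rV[F]_n}) : Prop :=
  exists2 b : F, b != 0 &
    forall a c, a \in D -> c \in D -> cnt a b = cnt c b -> a = c.

Definition propB alpha n (D : {vspace 'rV[F]_n}) : Prop :=
  forall c, c \in D -> c != 0 -> uniq (Vvec alpha c).

(* r = (r_1,...,r_{q-1}) is encoded as r : 'I_(q-1) -> nat, r_j = r (j-1) *)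
Definition Rsum (r : 'I_#|F|.-1 -> nat) : nat := (\sum_(j < #|F|.-1) r j)%N.

(* c^r : r_1 copies of alpha c, then r_2 copies of alpha^2 c, ... *)
Definition rep_seq alpha (r : 'I_#|F|.-1 -> nat) n (c : 'rV[F]_n) : seq F :=
  flatten [seq flatten (nseq (r j) [seq alpha ^+ j.+1 * c 0 i | i <- enum 'I_n])
          | j <- enum 'I_#|F|.-1].

Definition rep alpha (r : 'I_#|F|.-1 -> nat) n (c : 'rV[F]_n) : 'rV[F]_(Rsum r * n) :=
  \row_(i < Rsum r * n) nth 0 (rep_seq alpha r c) i.

Definition rep_code alpha (r : 'I_#|F|.-1 -> nat) n (C : {vspace 'rV[F]_n})
  : {vspace 'rV[F]_(Rsum r * n)} :=
  (linfun (@rep alpha r n) @: C)%VS.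

End Codes.

From Pilot Require Import Defs.
From HB Require Import structures.
From mathcomp Require Import all_boot all_order all_algebra all_field.
Import GRing.Theory.
Local Open Scope ring_scope.
Set Implicit Arguments. Unset Strict Implicit. Unset Printing Implicit Defensive.

(** Take r_j = (n+1)^(j-1).  Every coordinate of c^r is a fixed nonzero
    multiple of a coordinate of c, so wt(c^r) = R wt(c): the map c |-> c^r is
    injective and C(r) inherits the dimension, the non-degeneracy and the
    number of weights of C.  Moreover
      c^r[b] = sum_j (n+1)^(j-1) c[b / alpha^j]
    is a base-(n+1) expansion with digits at most n, so c^r[b] determines
    every c[b / alpha^j].  Reading off the lowest digit, b |-> c^r[b] is
    injective whenever b |-> c[b] is, which is (B).  For b = 1 the digits are
    the c[g] with g <> 0, so c^r[1] determines wt(c).  In an MWS code words of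
    equal weight are proportional: the (q^k-1)/(q-1) weight classes of the
    q^k-1 nonzero words each contain a punctured line of q-1 words.  Finally,
    if c = l a then a[1] = c[1] = a[1/l], and (B) forces l = 1. *)

Section PrimitiveRoot.
Variables (F : finFieldType) (alpha : F).
Hypothesis halpha : (#|F|.-1).-primitive_root alpha.

Lemma card_predF_gt0 : (0 < #|F|.-1)%N.
Proof. by rewrite -subn1 subn_gt0 finNzRing_gt1. Qed.

Lemma prim_root_neq0 : alpha != 0.
Proof.
apply/eqP => alpha0; have := prim_expr_order halpha.
by rewrite alpha0 expr0n eqn0Ngt card_predF_gt0 => /esym/eqP; rewrite oner_eq0.
Qed.

Lemma nonzero_eq_prim_expS (x : F) :
  x != 0 -> exists i : 'I_#|F|.-1, x = alpha ^+ i.+1.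
Proof.
move=> nx; have x_unity : x ^+ #|F|.-1 = 1.
  by apply: (mulfI nx); rewrite mulr1 -exprS prednK ?expf_card // ltnW ?finNzRing_gt1.
have [[[|i] lt_i] /= ->] := prim_rootP halpha x_unity.
  have lt_max : (#|F|.-1.-1 < #|F|.-1)%N by rewrite ltn_predL card_predF_gt0.
  exists (Ordinal lt_max) => /=.
  by rewrite prednK ?card_predF_gt0 // (prim_expr_order halpha) expr0.
by exists (Ordinal (ltnW lt_i)).
Qed.

Definition Vpoints : seq F := rcons [seq alpha ^+ i.+1 | i <- iota 0 #|F|.-1] 0.

Lemma Vvec_map n (c : 'rV[F]_n) : Vvec alpha c = map (cnt c) Vpoints.
Proof. by rewrite /Vvec /Vpoints map_rcons -map_comp. Qed.

Lemma perm_Vpoints : perm_eq Vpoints (enum F).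
Proof.
have memV x : x \in Vpoints.
  rewrite mem_rcons inE; have [//|nx] := eqVneq x 0.
  have [i ->] := nonzero_eq_prim_expS nx.
  by apply/mapP; exists (val i); rewrite ?mem_iota ?ltn_ord.
have uniqV : uniq Vpoints.
  apply: (leq_size_uniq (enum_uniq F) (fun x _ => memV x)).
  by rewrite size_rcons size_map size_iota -cardE ltn_predL ltnW ?finNzRing_gt1.
by apply: uniq_perm; rewrite ?enum_uniq // => x; rewrite mem_enum memV.
Qed.

Lemma uniq_Vvec n (c : 'rV[F]_n) : uniq (Vvec alpha c) = injectiveb (cnt c).
Proof. by rewrite Vvec_map (perm_uniq (perm_map _ perm_Vpoints)). Qed.

End PrimitiveRoot.

Section Weights.
Variables (F : finFieldType) (n : nat).
Implicit Types (c : 'rV[F]_n) (a b : F).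

Lemma cnt_le c b : (cnt c b <= n)%N.
Proof. by rewrite -[leqRHS]card_ord max_card. Qed.

Lemma cnt_scale a c b : a != 0 -> cnt (a *: c) b = cnt c (b / a).
Proof.
move=> a_neq0; apply: eq_card => i; rewrite !inE mxE.
by apply/eqP/eqP => [<-|->]; rewrite mulrC ?mulKf ?divfK.
Qed.

Lemma wt_scale a c : a != 0 -> wt (a *: c) = wt c.
Proof. by move=> a_neq0; apply: eq_card => i; rewrite !inE mxE mulf_eq0 negb_or a_neq0. Qed.

Lemma wt_add_cnt0 c : (wt c + cnt c 0%R)%N = n.
Proof.
rewrite -[RHS]card_ord -(cardsC [set i | c 0 i != 0]); congr addn.
by apply: eq_card => i; rewrite !inE negbK.
Qed.

Lemma wt_cnt c : wt c = (\sum_(g : F | g != 0%R) cnt c g)%N.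
Proof.
rewrite /wt -sum1dep_card (partition_big (fun i => c 0 i) (fun g => g != 0)) //.
apply: eq_bigr => g g_neq0; rewrite /cnt -sum1dep_card.
by apply: eq_bigl => i; case: (c 0 i =P g) => [->|]; rewrite ?g_neq0 ?andbF.
Qed.

Lemma wt_eq0 c : (wt c == 0%N) = (c == 0).
Proof.
rewrite cards_eq0; apply/eqP/eqP => [c_supp0|->]; last first.
  by apply/setP => i; rewrite !inE mxE eqxx.
apply/rowP => i; rewrite mxE; apply/eqP; apply: contraT => ci_neq0.
by have := in_set0 i; rewrite -c_supp0 inE ci_neq0.
Qed.

End Weights.

Lemma card_nth (T : eqType) (x0 : T) (s : seq T) m (P : pred T) :
  size s = m -> #|[set i : 'I_m | P (nth x0 s i)]| = count P s.
Proof. by move=> <-; rewrite -sum1_count (big_nth x0) big_mkord sum1dep_card. Qed.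

Section Repetition.
Variables (F : finFieldType) (alpha : F) (r : 'I_#|F|.-1 -> nat) (n : nat).
Implicit Types (c : 'rV[F]_n) (b : F).

Definition rep_index : seq ('I_#|F|.-1 * 'I_n) :=
  flatten [seq flatten (nseq (r j) [seq (j, i) | i <- enum 'I_n]) | j <- enum 'I_#|F|.-1].

Lemma rep_seqE c :
  rep_seq alpha r c = [seq alpha ^+ p.1.+1 * c 0 p.2 | p : 'I_#|F|.-1 * 'I_n <- rep_index].
Proof.
rewrite /rep_seq /rep_index map_flatten -[in RHS]map_comp; congr flatten.
by apply: eq_map => j /=; rewrite map_flatten map_nseq -map_comp.
Qed.

Lemma size_rep_index : size rep_index = (Rsum r * n)%N.
Proof.
rewrite size_flatten /shape -map_comp sumnE big_map big_enum /Rsum big_distrl.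
apply: eq_bigr => j _ /=.
by rewrite size_flatten /shape map_nseq sumn_nseq size_map size_enum_ord mulnC.
Qed.

Lemma rep_coord (i : 'I_(Rsum r * n)) :
  exists p : 'I_#|F|.-1 * 'I_n, forall c, rep alpha r c 0 i = alpha ^+ p.1.+1 * c 0 p.2.
Proof.
have lt_i : (i < size rep_index)%N by rewrite size_rep_index.
case def_idx: rep_index => [|p0 s]; first by rewrite def_idx in lt_i.
exists (nth p0 rep_index i) => c.
by rewrite mxE rep_seqE (nth_map p0).
Qed.

Lemma rep_is_linear : linear (@rep F alpha r n).
Proof.
move=> a u v; apply/rowP => i; have [p rep_i] := rep_coord i.
by rewrite [in RHS]mxE [in RHS]mxE !rep_i !mxE mulrDr mulrCA.
Qed.

Lemma cnt_rep c b : alpha != 0 ->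
  cnt (rep alpha r c) b = (\sum_(j < #|F|.-1) r j * cnt c (b / alpha ^+ j.+1))%N.
Proof.
move=> alpha_neq0; rewrite /cnt.
under eq_finset => i do rewrite mxE.
rewrite (card_nth 0 (pred1 b)); last by rewrite rep_seqE size_map size_rep_index.
rewrite rep_seqE /rep_index count_map count_flatten sumnE !big_map enumT.
apply: eq_bigr => j _.
rewrite count_flatten map_nseq sumn_nseq count_map -sum1_count mulnC sum1dep_card.
congr (_ * _)%N; rewrite -[RHS]/(cnt c _) -cnt_scale ?expf_neq0 //.
by apply: eq_card => i; rewrite !inE mxE.
Qed.

End Repetition.

HB.instance Definition _ (F : finFieldType) (alpha : F) r n :=
  GRing.isLinear.Build F 'rV[F]_n 'rV[F]_(Rsum r * n) *:%R (@rep F alpha r n)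
    (@rep_is_linear F alpha r n).

Section RepetitionCode.
Variables (F : finFieldType) (alpha : F) (r : 'I_#|F|.-1 -> nat) (n : nat).
Implicit Types (c : 'rV[F]_n) (C : {vspace 'rV[F]_n}).

Lemma mem_rep_code C x :
  reflect (exists2 c, c \in C & x = rep alpha r c) (x \in rep_code alpha r C).
Proof. by apply: (iffP memv_imgP) => -[c cC ->]; exists c; rewrite ?lfunE. Qed.

Hypothesis alpha_neq0 : alpha != 0.

Lemma wt_rep c : wt (rep alpha r c) = (Rsum r * wt c)%N.
Proof.
have cnt0_rep : cnt (rep alpha r c) 0 = (Rsum r * cnt c 0%R)%N.
  by rewrite cnt_rep // /Rsum big_distrl; apply: eq_bigr => j _; rewrite mul0r.
by apply/eqP; rewrite -(eqn_add2r (Rsum r * cnt c 0%R)) -mulnDr -cnt0_rep !wt_add_cnt0.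
Qed.

Hypothesis Rsum_gt0 : (0 < Rsum r)%N.

Lemma rep_inj : injective (@rep F alpha r n).
Proof.
move=> c d eq_rep; apply/eqP; rewrite -subr_eq0 -wt_eq0.
by rewrite -(eqn_pmul2l Rsum_gt0) -wt_rep raddfB /= eq_rep subrr muln0 wt_eq0.
Qed.

Lemma dim_rep_code C : \dim (rep_code alpha r C) = \dim C.
Proof.
apply: limg_dim_eq; have /eqP -> : lker (linfun (@rep F alpha r n)) == 0%VS.
  by apply/lker0P => c d; rewrite !lfunE; apply: rep_inj.
exact: capv0.
Qed.

(* [Defs.] disambiguates from MathComp's sesquilinear [nondegenerate]. *)
Lemma nondegenerate_rep_code C :
  Defs.nondegenerate C -> Defs.nondegenerate (rep_code alpha r C).
Proof.
move=> ndC i; have [p rep_i] := rep_coord alpha i; have [c cC cp] := ndC p.2.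
exists (rep alpha r c); first by apply/mem_rep_code; exists c.
by rewrite rep_i mulf_neq0 ?expf_neq0.
Qed.

Lemma num_weights_rep_code C : num_weights (rep_code alpha r C) = num_weights C.
Proof.
rewrite /num_weights -[RHS](size_map (muln (Rsum r))); apply/perm_size/uniq_perm.
- exact: undup_uniq.
- by rewrite map_inj_uniq ?undup_uniq // => u v /eqP; rewrite eqn_pmul2l // => /eqP.
move=> w; rewrite mem_undup mem_filter.
apply/andP/mapP => [[w_neq0 /imageP[_ /mem_rep_code[c cC ->] w_eq]]|].
  move: w_neq0; rewrite w_eq wt_rep muln_eq0 negb_or => /andP[_ wc_neq0].
  by exists (wt c); rewrite ?mem_undup ?mem_filter ?wc_neq0 ?image_f.
case=> x /[!(mem_undup, mem_filter)] /andP[wc_neq0 /imageP[c cC x_eq]] ->; subst x.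
rewrite muln_eq0 negb_or -lt0n Rsum_gt0 wc_neq0 -wt_rep; split=> //.
by apply: image_f; apply/mem_rep_code; exists c.
Qed.

Lemma MWS_rep_code (k : nat) C : is_MWS k C -> is_MWS k (rep_code alpha r C).
Proof.
case=> -[dimC ndC] nwC; split; last by rewrite num_weights_rep_code.
by split=> [|/ndC]; rewrite ?dim_rep_code //; apply: nondegenerate_rep_code.
Qed.

End RepetitionCode.

Lemma radix_digits_inj m N (x y : 'I_m -> nat) :
  (forall j, x j < N)%N -> (forall j, y j < N)%N ->
  (\sum_(j < m) N ^ j * x j = \sum_(j < m) N ^ j * y j)%N -> x =1 y.
Proof.
elim: m x y => [|m IHm] x y x_lt y_lt; first by move=> _ [].
have N_gt0 : (0 < N)%N by apply: leq_ltn_trans (x_lt ord0).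
have tailE (z : 'I_m.+1 -> nat) :
    (\sum_(i < m) N ^ lift ord0 i * z (lift ord0 i) =
     N * \sum_(i < m) N ^ i * z (lift ord0 i))%N.
  by rewrite big_distrr; apply: eq_bigr => i _; rewrite /= /bump /= add1n expnS mulnA.
rewrite !big_ord_recl !expn0 !mul1n !tailE => eq_sums.
have eq0 : x ord0 = y ord0.
  have := congr1 (modn^~ N) eq_sums.
  by rewrite /= ![(N * _)%N]mulnC ![(_ + _ * N)%N]addnC !modnMDl !modn_small.
move: eq_sums; rewrite eq0 => /addnI/eqP; rewrite eqn_pmul2l // => /eqP eq_tail.
move=> j; case: (unliftP ord0 j) => [j' ->|->] //.
exact: IHm (fun i => x_lt _) (fun i => y_lt _) eq_tail j'.
Qed.

Lemma card_fibers_eq (T : finType) (U : eqType) (S : {set T}) (f : T -> U) m :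
  (forall x, x \in S -> m <= #|[set y in S | f y == f x]|)%N ->
  (size (undup [seq f x | x in S]) * m = #|S|)%N ->
  forall x, x \in S -> #|[set y in S | f y == f x]| = m.
Proof.
set s := undup _; set fiber := fun w => #|[set y in S | f y == w]|.
move=> fiber_ge card_S x xS.
have fiber_ge_s w : w \in s -> (m <= fiber w)%N.
  by rewrite mem_undup => /imageP[y yS ->]; apply: fiber_ge.
have sum_fibers : (\sum_(w <- s) fiber w)%N = #|S|.
  have fiberE w : fiber w = (\sum_(y in S) (f y == w))%N.
    by rewrite /fiber -sum1dep_card big_mkcondr; apply: eq_bigr => y _; case: eqP.
  under eq_bigr do rewrite fiberE.
  rewrite exchange_big -sum1_card; apply: eq_bigr => y yS.
  transitivity (count_mem (f y) s : nat).
    rewrite -sum1_count [RHS]big_mkcond; apply: eq_bigr => w _.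
    by rewrite /= eq_sym; case: (_ == _).
  by rewrite count_uniq_mem ?undup_uniq ?mem_undup ?image_f.
have : (\sum_(w <- s | w \in s) (fiber w - m) == 0)%N.
  rewrite sumnB; last by move=> w /fiber_ge_s.
  by rewrite -!big_seq sum_fibers big_const_seq count_predT iter_addn_0 mulnC card_S subnn.
rewrite sum_nat_seq_eq0 => /allP/(_ (f x)).
rewrite mem_undup image_f // implyTb subn_eq0 => fiber_le.
by apply/eqP; rewrite eqn_leq fiber_le ?fiber_ge.
Qed.

Section MWS.
Variables (F : finFieldType) (n : nat).
Implicit Types (C : {vspace 'rV[F]_n}) (x : 'rV[F]_n).

Definition nonzero_words C : {set 'rV[F]_n} := [set x | (x \in C) && (x != 0)].

Lemma card_nonzero_words C : #|nonzero_words C| = (#|F| ^ \dim C).-1.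
Proof.
rewrite -card_vspace [in RHS](cardD1 0) mem0v /=; apply: eq_card => x.
by rewrite !inE andbC.
Qed.

Lemma num_weights_nonzero_words C :
  num_weights C = size (undup [seq wt x | x in nonzero_words C]).
Proof.
apply/perm_size/uniq_perm; rewrite ?undup_uniq // => w.
rewrite !mem_undup mem_filter; apply/andP/imageP => [[w_neq0 /imageP[x xC w_eq]]|].
  by exists x; rewrite // inE xC -wt_eq0 -w_eq.
case=> x; rewrite inE => /andP[xC x_neq0] ->.
by rewrite wt_eq0 x_neq0; split=> //; apply: image_f.
Qed.

Definition scalar_line x : {set 'rV[F]_n} := [set l *: x | l in [set~ (0 : F)]].

Lemma card_scalar_line x : x != 0 -> #|scalar_line x| = #|F|.-1.
Proof.
move=> x_neq0; rewrite card_imset ?cardsC1 // => l l' /eqP.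
by rewrite -subr_eq0 -scalerBl scaler_eq0 (negPf x_neq0) orbF subr_eq0 => /eqP.
Qed.

Lemma scalar_line_sub_fiber C x : x \in nonzero_words C ->
  scalar_line x \subset [set y in nonzero_words C | wt y == wt x].
Proof.
rewrite inE => /andP[xC x_neq0]; apply/subsetP => y /imsetP[l].
rewrite in_setC1 => l_neq0 ->.
by rewrite !inE memvZ // scaler_eq0 negb_or l_neq0 x_neq0 wt_scale /=.
Qed.

Lemma MWS_eq_wt_scale (k : nat) C a c :
  is_MWS k C -> a \in C -> c \in C -> a != 0 -> wt a = wt c ->
  exists2 l : F, l != 0 & c = l *: a.
Proof.
case=> -[dimC _] num_wC aC cC a_neq0 wt_ac.
have aS : a \in nonzero_words C by rewrite inE aC.
have cS : c \in nonzero_words C by rewrite inE cC -wt_eq0 -wt_ac wt_eq0.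
have fiber_ge x : x \in nonzero_words C ->
    (#|F|.-1 <= #|[set y in nonzero_words C | wt y == wt x]|)%N.
  move=> xS; have /andP[_ x_neq0] : (x \in C) && (x != 0) by rewrite inE in xS.
  by rewrite -(card_scalar_line x_neq0) subset_leq_card ?scalar_line_sub_fiber.
have card_weights :
    (size (undup [seq wt x | x in nonzero_words C]) * #|F|.-1)%N = #|nonzero_words C|.
  rewrite -num_weights_nonzero_words num_wC card_nonzero_words dimC -!subn1 divnK //.
  by rewrite !subn1 predn_exp dvdn_mulr.
have card_line_a : #|scalar_line a| = #|[set y in nonzero_words C | wt y == wt a]|.
  by rewrite card_scalar_line // (card_fibers_eq fiber_ge card_weights aS).
have /(subset_cardP card_line_a) line_a := scalar_line_sub_fiber aS.
have /imsetP[l] : c \in scalar_line a by rewrite line_a inE cS wt_ac eqxx.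
by rewrite in_setC1 => l_neq0 ->; exists l.
Qed.

End MWS.

Section RadixRepetition.
Variables (F : finFieldType) (alpha : F) (n : nat).
Hypothesis halpha : (#|F|.-1).-primitive_root alpha.

Definition radix_rep (j : 'I_#|F|.-1) : nat := n.+1 ^ j.

Let j0 : 'I_#|F|.-1 := Ordinal (card_predF_gt0 F).

Lemma radix_rep_neq0 : exists j, radix_rep j != 0%N.
Proof. by exists j0; rewrite /radix_rep expn_eq0. Qed.

Lemma Rsum_radix_rep_gt0 : (0 < Rsum radix_rep)%N.
Proof. by rewrite /Rsum (bigD1 j0) //= ltn_addr // expn_gt0. Qed.

Lemma cnt_radix_rep_inj (a c : 'rV[F]_n) x y :
  cnt (rep alpha radix_rep a) x = cnt (rep alpha radix_rep c) y ->
  forall j : 'I_#|F|.-1, cnt a (x / alpha ^+ j.+1) = cnt c (y / alpha ^+ j.+1).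
Proof.
rewrite !cnt_rep ?(prim_root_neq0 halpha) //.
by apply: radix_digits_inj => j; rewrite ltnS cnt_le.
Qed.

Lemma propB_radix_rep_code (C : {vspace 'rV[F]_n}) :
  propB alpha C -> propB alpha (rep_code alpha radix_rep C).
Proof.
move=> pB _ /mem_rep_code[c cC ->] rep_neq0.
have c_neq0 : c != 0 by apply: contraNneq rep_neq0 => ->; rewrite linear0.
have := pB c cC c_neq0; rewrite uniq_Vvec // => /injectiveP cnt_inj.
rewrite uniq_Vvec //; apply/injectiveP => x y /cnt_radix_rep_inj/(_ j0)/cnt_inj.
by apply/mulIf; rewrite invr_neq0 ?expf_neq0 ?(prim_root_neq0 halpha).
Qed.

Lemma propA_radix_rep_code (k : nat) (C : {vspace 'rV[F]_n}) :
  is_MWS k C -> propB alpha C -> propA (rep_code alpha radix_rep C).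
Proof.
move=> mws pB; exists 1; first exact: oner_neq0.
move=> _ _ /mem_rep_code[a aC ->] /mem_rep_code[c cC ->] /cnt_radix_rep_inj eq_digits.
suff -> : a = c by [].
have eq_cnt g : g != 0 -> cnt a g = cnt c g.
  move=> g_neq0; have [j] := nonzero_eq_prim_expS halpha (invr_neq0 g_neq0).
  by move/(congr1 GRing.inv); rewrite invrK => ->; rewrite -div1r eq_digits.
have wt_ac : wt a = wt c by rewrite !wt_cnt; apply: eq_bigr => g /eq_cnt.
have [a0|a_neq0] := eqVneq a 0.
  by rewrite a0; apply/esym/eqP; rewrite -wt_eq0 -wt_ac a0 wt_eq0.
have [l l_neq0 c_eq] := MWS_eq_wt_scale mws aC cC a_neq0 wt_ac.
have := pB a aC a_neq0; rewrite uniq_Vvec // => /injectiveP cnt_inj.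
have : cnt a 1 = cnt a l^-1 by rewrite eq_cnt ?oner_neq0 // c_eq cnt_scale // div1r.
by move/cnt_inj/(congr1 GRing.inv); rewrite invr1 invrK => l1; rewrite c_eq -l1 scale1r.
Qed.

End RadixRepetition.

Theorem mainTheorem9 (F : finFieldType) (alpha : F)
  (halpha : (#|F|.-1).-primitive_root alpha)
  (n k : nat) (C : {vspace 'rV[F]_n}) :
  is_MWS k C -> propB alpha C ->
  exists r : 'I_#|F|.-1 -> nat,
    (exists j, r j != 0%N) /\
    is_MWS k (rep_code alpha r C) /\
    propA (rep_code alpha r C) /\ propB alpha (rep_code alpha r C).
Proof.
move=> mws pB; exists (@radix_rep F n).
have alpha_neq0 := prim_root_neq0 halpha.
split; first exact: radix_rep_neq0.
split; first by apply: MWS_rep_code mws => //; apply: Rsum_radix_rep_gt0.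
by split; [apply: propA_radix_rep_code mws pB | apply: propB_radix_rep_code].
Qed.
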